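(* Let $F$ be a CD-function. Then there is a unique strictly positive solution $\varphi:(0,\infty)\to(0,\infty)$ of the ODE $\dot\varphi(t)+F(\varphi(t))=0$ for $t>0$ with $\lim_{t\to0+}\varphi(t)=\infty$. This function is strictly decreasing and log-convex on $(0,\infty)$, and $\lim_{t\to\infty}\varphi(t)=0$.
   Context: A CD-function is a continuous function $F:[0,\infty)\to[0,\infty)$ with $F(0)=0$, such that $x\mapsto F(x)/x$ is strictly increasing on $(0,\infty)$, and $\int_1^\infty dr/F(r)<\infty$. *)

From Stdlib Require Import Reals Lra.
Open Scope R_scope.

Definition continuous_on_nonneg (F : R -> R) : Prop :=
  forall x, 0 <= x -> limit1_in F (fun y => 0 <= y) (F x) x.

Definition improper_integral_1_infty_finite (g : R -> R) : Prop :=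
  (forall b, 1 <= b -> inhabited (Riemann_integrable g 1 b)) /\
  exists L : R, forall eps, 0 < eps -> exists M, forall b (pr : Riemann_integrable g 1 b),
      M <= b -> Rabs (RiemannInt pr - L) < eps.

(* CD-function: F : [0,oo) -> [0,oo) continuous, F 0 = 0, F(x)/x strictly
   increasing on (0,oo), int_1^oo dr/F(r) < oo.  F is given as a total
   function R -> R; only its values on [0,oo) matter. *)
Definition CD_function (F : R -> R) : Prop :=
  continuous_on_nonneg F /\
  (forall x, 0 <= x -> 0 <= F x) /\
  F 0 = 0 /\
  (forall x y, 0 < x -> x < y -> F x / x < F y / y) /\
  improper_integral_1_infty_finite (fun r => / F r).

Definition CD_solution (F phi : R -> R) : Prop :=
  (forall t, 0 < t -> 0 < phi t) /\
  (forall t, 0 < t -> derivable_pt_lim phi t (- F (phi t))) /\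
  (forall M, exists d, 0 < d /\ forall t, 0 < t < d -> M < phi t).

Definition strictly_decreasing_pos (phi : R -> R) : Prop :=
  forall s t, 0 < s -> s < t -> phi t < phi s.

Definition log_convex_pos (phi : R -> R) : Prop :=
  forall x y l, 0 < x -> 0 < y -> 0 <= l <= 1 ->
    ln (phi (l * x + (1 - l) * y)) <= l * ln (phi x) + (1 - l) * ln (phi y).

Definition tends_to_zero_at_infty (phi : R -> R) : Prop :=
  forall eps, 0 < eps -> exists T, forall t, T < t -> Rabs (phi t) < eps.

From Stdlib Require Import Reals Lra IndefiniteDescription.
From Coquelicot Require Import Coquelicot.
Open Scope R_scope.

(* Separating variables in phi' = -F(phi) gives G(phi(t)) = L - t, where G is a
   primitive of 1/F and L = lim_{y->oo} G(y) is finite by the integrability of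
   1/F at infinity.  G increases strictly on (0,oo) from -oo (near 0, F(r) <= F(1) r
   so G(y) <= ln y / F(1)) to L, so phi := G^-1(L - .) is well defined, solves the
   ODE by the inverse function theorem, blows up at 0+ and vanishes at oo.  Any
   other solution psi makes G(psi(t)) + t constant, and the blow-up forces the
   constant to be L, whence psi = phi.  Finally (ln phi)' = -F(phi)/phi increases
   because phi decreases and F(x)/x increases, so ln phi is convex. *)

Lemma strict_incr_of_deriv_pos (f f' : R -> R) (a b : R) :
  a < b -> (forall c, a <= c <= b -> derivable_pt_lim f c (f' c)) ->
  (forall c, a <= c <= b -> 0 < f' c) -> f a < f b.
Proof.
  intros Hab Hd Hpos.
  destruct (MVT_cor2 f f' a b Hab Hd) as [c [Hmvt Hc]].
  assert (0 < f' c * (b - a)) by (apply Rmult_lt_0_compat; [apply Hpos|]; lra).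
  lra.
Qed.

Lemma incr_of_deriv_nonneg (f f' : R -> R) (a b : R) :
  a <= b -> (forall c, a <= c <= b -> derivable_pt_lim f c (f' c)) ->
  (forall c, a <= c <= b -> 0 <= f' c) -> f a <= f b.
Proof.
  intros Hab Hd Hnn.
  destruct (Rle_lt_or_eq_dec _ _ Hab) as [Hlt | <-]; [|lra].
  destruct (MVT_cor2 f f' a b Hlt Hd) as [c [Hmvt Hc]].
  assert (0 <= f' c * (b - a)) by (apply Rmult_le_pos; [apply Hnn|]; lra).
  lra.
Qed.

Lemma eq_of_deriv_zero (f : R -> R) (a b : R) :
  a <= b -> (forall c, a <= c <= b -> derivable_pt_lim f c 0) -> f a = f b.
Proof.
  intros Hab Hd.
  destruct (Rle_lt_or_eq_dec _ _ Hab) as [Hlt | <-]; [|reflexivity].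
  destruct (MVT_cor2 f (fun _ => 0) a b Hlt Hd) as [c [Hmvt _]].
  lra.
Qed.

Lemma convex_of_deriv_nondecr_lt (u u' : R -> R) (x y l : R) :
  (forall t, x <= t <= y -> derivable_pt_lim u t (u' t)) ->
  (forall s t, x <= s -> s < t -> t <= y -> u' s <= u' t) ->
  x < y -> 0 < l < 1 ->
  u (l * x + (1 - l) * y) <= l * u x + (1 - l) * u y.
Proof.
  intros Hd Hmono Hxy Hl.
  set (z := l * x + (1 - l) * y).
  assert (Hxz : z - x = (1 - l) * (y - x)) by (unfold z; ring).
  assert (Hzy : y - z = l * (y - x)) by (unfold z; ring).
  destruct (MVT_cor2 u u' x z) as [c1 [E1 Hc1]]; [nra| intros c Hc; apply Hd; nra|].
  destruct (MVT_cor2 u u' z y) as [c2 [E2 Hc2]]; [nra| intros c Hc; apply Hd; nra|].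
  assert (Hc12 : u' c1 <= u' c2) by (apply Hmono; lra).
  rewrite Hxz in E1; rewrite Hzy in E2.
  assert (0 <= l * (1 - l) * (y - x) * (u' c2 - u' c1)).
  { repeat apply Rmult_le_pos; nra. }
  nra.
Qed.

Lemma convex_pos_of_deriv_nondecr (u u' : R -> R) :
  (forall t, 0 < t -> derivable_pt_lim u t (u' t)) ->
  (forall s t, 0 < s -> s < t -> u' s <= u' t) ->
  forall x y l, 0 < x -> 0 < y -> 0 <= l <= 1 ->
  u (l * x + (1 - l) * y) <= l * u x + (1 - l) * u y.
Proof.
  intros Hd Hmono x y l Hx Hy Hl.
  destruct (Req_dec l 0) as [-> | Hl0].
  { replace (0 * x + (1 - 0) * y) with y by ring. lra. }
  destruct (Req_dec l 1) as [-> | Hl1].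
  { replace (1 * x + (1 - 1) * y) with x by ring. lra. }
  destruct (Rtotal_order x y) as [Hxy | [<- | Hyx]].
  - apply (convex_of_deriv_nondecr_lt u u'); try lra.
    + intros t Ht. apply Hd; lra.
    + intros s t Hs Hst Ht. apply Hmono; lra.
  - replace (l * x + (1 - l) * x) with x by ring. lra.
  - replace (l * x + (1 - l) * y) with ((1 - l) * y + (1 - (1 - l)) * x) by ring.
    enough (u ((1 - l) * y + (1 - (1 - l)) * x) <= (1 - l) * u y + (1 - (1 - l)) * u x) by lra.
    apply (convex_of_deriv_nondecr_lt u u'); try lra.
    + intros t Ht. apply Hd; lra.
    + intros s t Hs Hst Ht. apply Hmono; lra.
Qed.

Lemma derivable_pt_lim_inverse (f f' g : R -> R) (a b y : R) :
  a < b ->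
  (forall x z, a <= x -> x < z -> z <= b -> f x < f z) ->
  (forall x, a <= x <= b -> derivable_pt_lim f x (f' x)) ->
  (forall z, f a <= z <= f b -> f (g z) = z /\ a <= g z <= b) ->
  f a < y < f b -> f' (g y) <> 0 ->
  derivable_pt_lim g y (/ f' (g y)).
Proof.
  intros Hab Hincr Hd Hg Hy Hnz.
  assert (Hfab : f a < f b) by (apply Hincr; lra).
  assert (Hga : g (f a) = a).
  { destruct (Hg (f a)) as [E B]; [lra|].
    destruct (Rle_lt_or_eq_dec _ _ (proj1 B)) as [Hlt|]; [|auto].
    assert (f a < f (g (f a))) by (apply Hincr; lra). lra. }
  assert (Hgb : g (f b) = b).
  { destruct (Hg (f b)) as [E B]; [lra|].
    destruct (Rle_lt_or_eq_dec _ _ (proj2 B)) as [Hlt|]; [|auto].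
    assert (f (g (f b)) < f b) by (apply Hincr; lra). lra. }
  assert (Hgy := Hg y ltac:(lra)).
  assert (Prf : forall x, g (f a) <= x <= g (f b) -> derivable_pt f x).
  { rewrite Hga, Hgb. intros x Hx. exact (exist _ (f' x) (Hd x Hx)). }
  assert (Hcont : continuity_pt g y).
  { apply (Ranalysis5.continuity_pt_recip_interv f g a b Hab); auto.
    - intros z Hz1 Hz2. apply (Hg z); lra.
    - intros z Hz1 Hz2. apply (Hg z); lra.
    - intros x Hx. apply derivable_continuous_pt. exists (f' x). now apply Hd. }
  assert (Hgy_bounds : g (f a) <= g y <= g (f b)) by (rewrite Hga, Hgb; lra).
  assert (Hder := derive_pt_eq_0 f (g y) (f' (g y)) (Prf (g y) Hgy_bounds) (Hd _ (proj2 Hgy))).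
  assert (K := Ranalysis5.derivable_pt_lim_recip_interv f g (f a) (f b) y Prf Hcont Hfab Hy Hgy_bounds).
  rewrite Hder in K. unfold Rdiv in K. rewrite Rmult_1_l in K.
  apply K; [|exact Hnz].
  intros z Hz. apply (Hg z Hz).
Qed.

Definition tends_to_at_infty (f : R -> R) (L : R) : Prop :=
  forall eps, 0 < eps -> exists M, forall b, M <= b -> Rabs (f b - L) < eps.

Section CDFunction.

Variable F : R -> R.
Hypothesis hF : CD_function F.

Lemma CD_slope_lt x y : 0 < x -> x < y -> F x / x < F y / y.
Proof. apply hF. Qed.

Lemma CD_pos x : 0 < x -> 0 < F x.
Proof.
  intros Hx.
  destruct hF as [_ [Hnn _]].
  assert (Hslope := CD_slope_lt (x / 2) x ltac:(lra) ltac:(lra)).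
  assert (0 <= F (x / 2) / (x / 2)).
  { apply Rmult_le_pos; [apply Hnn; lra | apply Rlt_le, Rinv_0_lt_compat; lra]. }
  replace (F x) with (F x / x * x) by (field; lra).
  apply Rmult_lt_0_compat; lra.
Qed.

Lemma CD_le_linear x y : 0 < x <= y -> F x * y <= F y * x.
Proof.
  intros [Hx Hxy].
  destruct (Rle_lt_or_eq_dec _ _ Hxy) as [Hlt | <-]; [|lra].
  assert (Hslope := CD_slope_lt x y Hx Hlt).
  unfold Rdiv in Hslope.
  apply (Rmult_le_reg_r (/ x * / y)); [apply Rmult_lt_0_compat; apply Rinv_0_lt_compat; lra|].
  replace (F x * y * (/ x * / y)) with (F x * / x) by (field; lra).
  replace (F y * x * (/ x * / y)) with (F y * / y) by (field; lra).
  lra.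
Qed.

Lemma CD_continuity_pt x : 0 < x -> continuity_pt F x.
Proof.
  intros Hx eps Heps.
  destruct hF as [Hc _].
  destruct (Hc x (Rlt_le _ _ Hx) eps Heps) as [d [Hd Hclose]].
  exists (Rmin d x). split; [apply Rmin_pos; lra|].
  intros y [_ Hy]. simpl in Hy. unfold R_dist in Hy.
  apply Hclose. split.
  - assert (Hyx : Rabs (y - x) < x) by (eapply Rlt_le_trans; [exact Hy | apply Rmin_r]).
    apply Rabs_def2 in Hyx. simpl. lra.
  - eapply Rlt_le_trans; [exact Hy | apply Rmin_l].
Qed.

Lemma inv_CD_continuous x : 0 < x -> continuous (fun r => / F r) x.
Proof.
  intros Hx. apply continuity_pt_filterlim, continuity_pt_inv.
  - now apply CD_continuity_pt.
  - now apply Rgt_not_eq, CD_pos.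
Qed.

Definition G (y : R) : R := RInt (fun r => / F r) 1 y.

Lemma G_deriv y : 0 < y -> derivable_pt_lim G y (/ F y).
Proof.
  intros Hy. apply is_derive_Reals.
  apply (is_derive_RInt (fun r => / F r) G 1 y).
  - assert (Hr : 0 < y / 2) by lra.
    exists (mkposreal _ Hr). intros b Hb.
    change (Rabs (b - y) < y / 2) in Hb. apply Rabs_def2 in Hb.
    apply (@RInt_correct R_CompleteNormedModule), (@ex_RInt_continuous R_CompleteNormedModule).
    intros z Hz. apply inv_CD_continuous.
    assert (0 < Rmin 1 b) by (apply Rmin_pos; lra). lra.
  - now apply inv_CD_continuous.
Qed.

Lemma G_lt a b : 0 < a -> a < b -> G a < G b.
Proof.
  intros Ha Hab. apply (strict_incr_of_deriv_pos G (fun y => / F y)); [exact Hab | |].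
  - intros c Hc. apply G_deriv; lra.
  - intros c Hc. apply Rinv_0_lt_compat, CD_pos; lra.
Qed.

Lemma G_lt_inv a b : 0 < a -> 0 < b -> G a < G b -> a < b.
Proof.
  intros Ha Hb HG. destruct (Rtotal_order a b) as [| [<- | Hba]]; [auto | lra |].
  assert (G b < G a) by now apply G_lt. lra.
Qed.

Lemma G_le_inv a b : 0 < a -> 0 < b -> G a <= G b -> a <= b.
Proof.
  intros Ha Hb HG. destruct (Rle_or_lt a b) as [| Hba]; [auto|].
  assert (G b < G a) by now apply G_lt. lra.
Qed.

Lemma G_continuity_pt y : 0 < y -> continuity_pt G y.
Proof. intros Hy. apply derivable_continuous_pt. exists (/ F y). now apply G_deriv. Qed.

Lemma G_tends_to_limit : exists L, tends_to_at_infty G L.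
Proof.
  destruct hF as [_ [_ [_ [_ [Hint [L HL]]]]]].
  exists L. intros eps Heps. destruct (HL eps Heps) as [M HM].
  exists (Rmax M 1). intros b Hb.
  assert (HM1 := Rmax_l M 1). assert (H1 := Rmax_r M 1).
  destruct (Hint b ltac:(lra)) as [pr].
  unfold G. rewrite (RInt_Reals _ _ _ pr). apply HM. lra.
Qed.

Lemma G_le_ln y : 0 < y <= 1 -> G y <= ln y / F 1.
Proof.
  intros Hy.
  assert (HF1 : 0 < F 1) by (apply CD_pos; lra).
  assert (HG1 : G 1 = 0) by apply (@RInt_point R_CompleteNormedModule).
  enough (G y - ln y / F 1 <= G 1 - ln 1 / F 1) by (rewrite HG1, ln_1 in *; lra).
  apply (incr_of_deriv_nonneg (fun z => G z - ln z / F 1) (fun z => / F z - / z / F 1)); [lra | |].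
  - intros c Hc. apply derivable_pt_lim_minus; [apply G_deriv; lra|].
    apply (derivable_pt_lim_div_scal ln). apply derivable_pt_lim_ln; lra.
  - intros c Hc.
    assert (HFc := CD_pos c ltac:(lra)).
    assert (Hlin := CD_le_linear c 1 ltac:(lra)).
    replace (/ F c - / c / F 1) with ((F 1 * c - F c) / (F c * c * F 1)) by (field; lra).
    apply Rmult_le_pos; [lra|].
    apply Rlt_le, Rinv_0_lt_compat. repeat apply Rmult_lt_0_compat; lra.
Qed.

Section Limit.

Variable L : R.
Hypothesis G_lim : tends_to_at_infty G L.

Lemma G_lt_limit y : 0 < y -> G y < L.
Proof.
  intros Hy.
  assert (Hgap : 0 < G (y + 1) - G y) by (assert (G y < G (y + 1)) by (apply G_lt; lra); lra).
  destruct (G_lim _ Hgap) as [M HM].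
  set (b := Rmax M (y + 2)).
  assert (HMb : M <= b) by apply Rmax_l. assert (Hyb : y + 2 <= b) by apply Rmax_r.
  assert (Hclose := HM b HMb). apply Rabs_def2 in Hclose.
  assert (G (y + 1) < G b) by (apply G_lt; lra).
  lra.
Qed.

Lemma G_surjective m : m < L -> exists y, 0 < y /\ G y = m.
Proof.
  intros Hm.
  assert (HF1 : 0 < F 1) by (apply CD_pos; lra).
  set (a := Rmin 1 (exp ((m - 1) * F 1))).
  assert (Ha0 : 0 < a) by (apply Rmin_pos; [lra | apply exp_pos]).
  assert (Ha1 : a <= 1) by apply Rmin_l.
  assert (Ga : G a < m).
  { assert (Hln : ln a <= (m - 1) * F 1).
    { rewrite <- (ln_exp ((m - 1) * F 1)). apply ln_le; [exact Ha0 | apply Rmin_r]. }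
    assert (ln a / F 1 <= m - 1).
    { apply (Rmult_le_reg_r (F 1)); [exact HF1|].
      unfold Rdiv. rewrite Rmult_assoc, Rinv_l; lra. }
    assert (G a <= ln a / F 1) by (apply G_le_ln; lra).
    lra. }
  destruct (G_lim (L - m) ltac:(lra)) as [M HM].
  set (b := Rmax M 1).
  assert (Hb1 : 1 <= b) by apply Rmax_r.
  assert (Gb : m < G b).
  { assert (Hclose := HM b (Rmax_l M 1)). apply Rabs_def2 in Hclose. lra. }
  assert (Hab : a < b) by (apply G_lt_inv; lra).
  destruct (Ranalysis5.IVT_interv (fun z => G z - m) a b) as [y [Hy Ey]]; try lra.
  - intros c Hc. apply continuity_pt_minus; [apply G_continuity_pt; lra|].
    apply continuity_pt_const. intros u v. reflexivity.
  - exists y. split; lra.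
Qed.

Lemma G_inverse_exists : exists phi : R -> R,
  (forall t, 0 < t -> 0 < phi t) /\ (forall t, 0 < t -> G (phi t) = L - t).
Proof.
  assert (Hchoice : forall t, exists y, 0 < t -> 0 < y /\ G y = L - t).
  { intros t. destruct (Rlt_or_le 0 t) as [Ht | Ht].
    - destruct (G_surjective (L - t)) as [y Hy]; [lra|]. now exists y.
    - exists 0. lra. }
  exists (fun t => proj1_sig (constructive_indefinite_description _ (Hchoice t))).
  split; intros t Ht; apply (proj2_sig (constructive_indefinite_description _ (Hchoice t)) Ht).
Qed.

Lemma CD_solution_G psi : CD_solution F psi -> forall t, 0 < t -> G (psi t) = L - t.
Proof.
  intros [psi_pos [psi_deriv psi_blowup]] t Ht.
  set (k := fun s => G (psi s) + s).
  assert (k_deriv : forall s, 0 < s -> derivable_pt_lim k s 0).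
  { intros s Hs.
    replace 0 with (/ F (psi s) * - F (psi s) + 1)
      by (field; apply Rgt_not_eq, CD_pos, psi_pos, Hs).
    apply (derivable_pt_lim_plus (comp G psi) id); [|apply derivable_pt_lim_id].
    apply derivable_pt_lim_comp; [now apply psi_deriv | now apply G_deriv, psi_pos]. }
  (* k is constant, and k s -> L as s -> 0+ because psi blows up there *)
  enough (k t = L) by (unfold k in *; lra).
  apply cond_eq. intros eps Heps.
  destruct (G_lim (eps / 2) ltac:(lra)) as [M HM].
  destruct (psi_blowup M) as [d [Hd Hbig]].
  set (s := Rmin t (Rmin d (eps / 2)) / 2).
  assert (Hmin_t := Rmin_l t (Rmin d (eps / 2))).
  assert (Hmin_d := Rmin_l d (eps / 2)). assert (Hmin_e := Rmin_r d (eps / 2)).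
  assert (Hmin_r := Rmin_r t (Rmin d (eps / 2))).
  assert (Hmin_pos : 0 < Rmin t (Rmin d (eps / 2))) by (repeat apply Rmin_pos; lra).
  assert (Hs : 0 < s < d) by (unfold s; lra).
  rewrite <- (eq_of_deriv_zero k s t); [| unfold s; lra | intros c Hc; apply k_deriv; lra].
  assert (Hpsi_s := Hbig s Hs).
  assert (Hclose := HM (psi s) ltac:(lra)).
  assert (G (psi s) < L) by (apply G_lt_limit, psi_pos; lra).
  apply Rabs_def2 in Hclose. unfold k. apply Rabs_def1; unfold s in *; lra.
Qed.

Section Inverse.

Variable phi : R -> R.
Hypothesis phi_pos : forall t, 0 < t -> 0 < phi t.
Hypothesis G_phi : forall t, 0 < t -> G (phi t) = L - t.

Lemma phi_strictly_decreasing : strictly_decreasing_pos phi.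
Proof.
  intros s t Hs Hst.
  apply G_lt_inv; [apply phi_pos; lra | apply phi_pos; lra |].
  rewrite !G_phi; lra.
Qed.

Lemma phi_deriv t : 0 < t -> derivable_pt_lim phi t (- F (phi t)).
Proof.
  intros Ht.
  assert (Hp := phi_pos t Ht).
  set (a := phi t / 2). set (b := phi t + 1).
  assert (Hinv : derivable_pt_lim (fun z => phi (L - z)) (L - t) (/ / F (phi (L - (L - t))))).
  { apply (derivable_pt_lim_inverse G (fun y => / F y) (fun z => phi (L - z)) a b); unfold a, b.
    - lra.
    - intros x z Hx Hxz Hz. apply G_lt; lra.
    - intros x Hx. apply G_deriv; lra.
    - intros z Hz.
      assert (HzL : 0 < L - z) by (assert (G (phi t + 1) < L) by (apply G_lt_limit; lra); lra).
      assert (HG : G (phi (L - z)) = z) by (rewrite G_phi; [ring | exact HzL]).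
      assert (Hpz := phi_pos _ HzL).
      repeat split; [exact HG | apply G_le_inv; lra | apply G_le_inv; lra].
    - rewrite <- G_phi by exact Ht. split; apply G_lt; lra.
    - replace (L - (L - t)) with t by ring.
      apply Rinv_neq_0_compat, Rgt_not_eq, CD_pos, Hp. }
  replace (L - (L - t)) with t in Hinv by ring.
  rewrite Rinv_inv in Hinv.
  assert (Hlin : derivable_pt_lim (fun s => L - s) t (-1))
    by (apply is_derive_Reals; auto_derive; [exact I | ring]).
  assert (Hcomp := derivable_pt_lim_comp _ _ t _ _ Hlin Hinv).
  replace (- F (phi t)) with (F (phi t) * -1) by ring.
  apply is_derive_Reals.
  apply (is_derive_ext (comp (fun z => phi (L - z)) (fun s => L - s)));
    [intros s; unfold comp; f_equal; ring | now apply is_derive_Reals].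
Qed.

Lemma phi_solution : CD_solution F phi.
Proof.
  split; [exact phi_pos | split; [exact phi_deriv |]].
  intros M. set (M1 := Rmax M 1).
  assert (HM : M <= M1) by apply Rmax_l. assert (H1 : 1 <= M1) by apply Rmax_r.
  exists (L - G M1). split; [assert (G M1 < L) by (apply G_lt_limit; lra); lra|].
  intros t [Ht Htd].
  enough (M1 < phi t) by lra.
  apply G_lt_inv; [lra | now apply phi_pos |]. rewrite G_phi; lra.
Qed.

Lemma phi_unique psi : CD_solution F psi -> forall t, 0 < t -> psi t = phi t.
Proof.
  intros Hpsi t Ht.
  assert (Hp := phi_pos t Ht). assert (Hq := proj1 Hpsi t Ht).
  apply Rle_antisym; apply G_le_inv; try lra;
    rewrite G_phi, (CD_solution_G psi Hpsi); lra.
Qed.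

Lemma phi_log_convex : log_convex_pos phi.
Proof.
  unfold log_convex_pos.
  apply (convex_pos_of_deriv_nondecr (fun t => ln (phi t)) (fun t => - F (phi t) / phi t)).
  - intros t Ht.
    replace (- F (phi t) / phi t) with (/ phi t * - F (phi t)) by (field; now apply Rgt_not_eq, phi_pos).
    apply (derivable_pt_lim_comp phi ln); [now apply phi_deriv | now apply derivable_pt_lim_ln, phi_pos].
  - intros s t Hs Hst.
    assert (Hslope := CD_slope_lt (phi t) (phi s) ltac:(apply phi_pos; lra)
                        (phi_strictly_decreasing s t Hs Hst)).
    unfold Rdiv in *. lra.
Qed.

Lemma phi_tends_to_zero : tends_to_zero_at_infty phi.
Proof.
  intros eps Heps. exists (L - G eps). intros t Ht.
  assert (Ht0 : 0 < t) by (assert (G eps < L) by (now apply G_lt_limit); lra).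
  assert (Hp := phi_pos t Ht0).
  rewrite Rabs_right by lra.
  apply G_lt_inv; [exact Hp | exact Heps |]. rewrite G_phi; lra.
Qed.

End Inverse.

End Limit.

End CDFunction.

Theorem lemma3p5 (F : R -> R) (hF : CD_function F) :
  exists phi : R -> R,
    CD_solution F phi /\
    (forall psi : R -> R, CD_solution F psi -> forall t, 0 < t -> psi t = phi t) /\
    strictly_decreasing_pos phi /\
    log_convex_pos phi /\
    tends_to_zero_at_infty phi.
Proof.
  destruct (G_tends_to_limit F hF) as [L G_lim].
  destruct (G_inverse_exists F hF L G_lim) as [phi [phi_pos G_phi]].
  exists phi. refine (conj _ (conj _ (conj _ (conj _ _)))).
  - exact (phi_solution F hF L G_lim phi phi_pos G_phi).
  - exact (phi_unique F hF L G_lim phi phi_pos G_phi).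
  - exact (phi_strictly_decreasing F hF L phi phi_pos G_phi).
  - exact (phi_log_convex F hF L G_lim phi phi_pos G_phi).
  - exact (phi_tends_to_zero F hF L G_lim phi phi_pos G_phi).
Qed.
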